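(* Let $D>0$, $r\in(0,1)$, $\theta_m=Dr^m$ ($m\in\mathbb N$), $\mathcal B=\mathcal B(\{\theta_m\})$, and $b_1,b_2>0$. There exists $C_4>0$, depending only on $b_1,b_2$ (besides $N,D,r$), such that for all $m,q\in\mathbb N$ with $m\ge2$ and $Dr^{m+1}\le1$ and every $g\in V$ satisfying (H), $\|\mathscr L_g^q-K^{(q)}_{g,m}\|_{\mathcal B\to\mathcal B}\le C_4^q(r^{2m})^q$.
   Context: $\Sigma_{\mathbf A}^+$ is the one-sided Markov shift of an $N\times N$ zero-one aperiodic matrix $\mathbf A$, $\sigma_{\mathbf A}$ the shift. $\mathrm{var}_k(\phi)=\sup\{|\phi(\omega)-\phi(\omega')|:\omega_j=\omega'_j,\ 0\le j\le k-1\}$; $V=\{\phi:\mathrm{var}_k(\phi)^{1/k}\to0\}$. $(\mathscr L_g\phi)(\omega)=\sum_{\sigma_{\mathbf A}\omega'=\omega}e^{g(\omega')}\phi(\omega')$. $\mathcal B(\{\theta_m\})=\{\phi\in V:\exists C\ge0,\ \mathrm{var}_k(\phi)\le C\theta_{k+1}^k\ \forall k\ge0\}$ with norm $\|\phi\|_\infty+\inf C$. Fix a Borel probability $\mu$ charging all nonempty open sets; $(E_m\phi)(\omega)=\mu([\omega|m])^{-1}\int_{[\omega|m]}\phi\,d\mu$, $[\omega|m]=\{\xi:\xi_j=\omega_j,0\le j\le m-1\}$. $K_{g,m}=\mathscr L_g\circ E_m$, $K^{(q)}_{g,m}=\mathscr L_g^q-(\mathscr L_g-K_{g,m})^q$.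 Condition (H) on $g\in V$: $e^{\max\mathrm{Re}\,g}\le b_1$ and $\mathrm{var}_k(g)\le b_2\theta_k^k$ for all $k\in\mathbb N$. *)

From HB Require Import structures.
From mathcomp Require Import all_boot all_order all_algebra.
From mathcomp Require Import all_classical all_reals all_analysis.
From mathcomp Require Import complex.
Set Implicit Arguments. Unset Strict Implicit. Unset Printing Implicit Defensive.
Import Order.TTheory GRing.Theory Num.Theory.
Local Open Scope classical_set_scope.
Local Open Scope ring_scope.

(* Full one-sided shift on the alphabet 'I_n.+1 (N = n.+1 symbols). *)
Definition Shift (n : nat) := nat -> 'I_n.+1.
HB.instance Definition _ n := gen_eqMixin (Shift n).
HB.instance Definition _ n := gen_choiceMixin (Shift n).
HB.instance Definition _ n := isPointed.Build (Shift n) (fun _ => ord0).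

Definition cyl n (w : Shift n) (m : nat) : set (Shift n) :=
  [set x | forall j, (j < m)%N -> x j = w j].

Definition cylinders n : set (set (Shift n)) :=
  [set B | exists w m, B = cyl w m].

(* Borel sigma-algebra of the product topology = sigma-algebra generated by
   the cylinders. *)
Definition SigmaMT n := g_sigma_algebraType (@cylinders n).

Definition zero_one n (A : 'M[int]_n.+1) := forall i j, A i j = 0 \/ A i j = 1.
Definition aperiodic n (A : 'M[int]_n.+1) :=
  exists p, (0 < p)%N /\ forall i j, 0 < (A ^+ p) i j.

Definition admissible n (A : 'M[int]_n.+1) (x : Shift n) :=
  forall j, A (x j) (x j.+1) = 1.
Definition SigmaA n (A : 'M[int]_n.+1) : set (Shift n) := [set x | admissible A x].

Definition scons n (a : 'I_n.+1) (x : Shift n) : Shift n :=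
  fun j => if j is j'.+1 then x j' else a.

(* open subsets of Sigma_A^+ for the (relative) product topology *)
Definition openA n (A : 'M[int]_n.+1) (U : set (Shift n)) :=
  U `<=` SigmaA A /\ forall x, U x -> exists m, cyl x m `&` SigmaA A `<=` U.

Section Ops.
Variables (R : realType) (n : nat) (A : 'M[int]_n.+1).

Definition cexp (z : R[i]) : R[i] :=
  Complex (expR (complex.Re z) * cos (complex.Im z)) (expR (complex.Re z) * sin (complex.Im z)).

Definition var (k : nat) (phi : Shift n -> R[i]) : \bar R :=
  ereal_sup [set e | exists x y, SigmaA A x /\ SigmaA A y /\
     (forall j, (j < k)%N -> x j = y j) /\ e = (Normc.normc (phi x - phi y))%:E].

Definition supnorm (phi : Shift n -> R[i]) : \bar R :=
  ereal_sup [set e | exists x, SigmaA A x /\ e = (Normc.normc (phi x))%:E].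

Definition varroot (phi : Shift n -> R[i]) : R^nat :=
  fun k => fine (var k phi) `^ (k%:R^-1).

Definition inV (phi : Shift n -> R[i]) :=
  (\forall k \near \oo, (var k phi < +oo)%E) /\ varroot phi @ \oo --> 0.

Definition theta (D r : R) (m : nat) : R := D * r ^+ m.

Definition Bconsts (th : nat -> R) (phi : Shift n -> R[i]) : set R :=
  [set C | 0 <= C /\ forall k, (var k phi <= (C * th k.+1 ^+ k)%:E)%E].

Definition inB (th : nat -> R) (phi : Shift n -> R[i]) :=
  inV phi /\ Bconsts th phi !=set0.

Definition Bnorm (th : nat -> R) (phi : Shift n -> R[i]) : R :=
  fine (supnorm phi) + inf (Bconsts th phi).

(* transfer operator: sum over the preimages a.x of x lying in Sigma_A^+ *)
Definition Lop (g : Shift n -> R[i]) (phi : Shift n -> R[i]) : Shift n -> R[i] :=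
  fun x => \sum_(a < n.+1)
    (if `[< admissible A (scons a x) >] then cexp (g (scons a x)) * phi (scons a x)
     else 0).

Definition cint (mu : {measure set (SigmaMT n) -> \bar R}) (D : set (Shift n))
  (f : Shift n -> R[i]) : R[i] :=
  Complex (Rintegral mu D (fun x => complex.Re (f x))) (Rintegral mu D (fun x => complex.Im (f x))).

Definition Eop (mu : {measure set (SigmaMT n) -> \bar R}) (m : nat)
  (phi : Shift n -> R[i]) : Shift n -> R[i] :=
  fun x => Complex (fine (mu (cyl x m `&` SigmaA A)))^-1 0
           * cint mu (cyl x m `&` SigmaA A) phi.

Definition opsub (F G : (Shift n -> R[i]) -> (Shift n -> R[i])) :=
  fun phi x => F phi x - G phi x.

Definition Kop g mu m := fun phi => Lop g (Eop mu m phi).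

Definition Kq g mu m (q : nat) :=
  opsub (iter q (Lop g)) (iter q (opsub (Lop g) (Kop g mu m))).

End Ops.

From HB Require Import structures.
From mathcomp Require Import all_boot all_order all_algebra.
From mathcomp Require Import all_classical all_reals all_analysis.
From mathcomp Require Import complex.
From mathcomp Require Import ring lra zify.
Import Order.TTheory GRing.Theory Num.Theory.
Local Open Scope classical_set_scope.
Local Open Scope ring_scope.

(* Since K^(q)_{g,m} = L_g^q - (L_g - K_{g,m})^q, the operator to bound is the q-th power
   of L_g - K_{g,m}, and it suffices to treat one factor.  Write (L_g - K_{g,m}) phi = L_g psi
   with psi = phi - E_m phi, the deviation of phi from its averages on m-cylinders.  If
   var_k phi <= C theta_{k+1}^k, then |psi| <= 2 var_m phi <= 2 C D^2 r^{2m}, var_k psi =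
   var_k phi for k >= m, and var_k psi <= 2 |psi|_oo for k < m; when D r^{m+1} <= 1 all of
   these are O(r^{2m}) C theta_{k+1}^k.  The transfer operator maps bounds of this shape to
   bounds of the same shape at the cost of a factor depending only on N, D, b1, b2, because
   e^g is bounded by b1 and Lipschitz along cylinders by (H).  Iterating q times gives the
   claim with C4 = 2 x (that factor). *)


Section ComplexExp.
Context {R : realType}.
Import numFieldTopology.Exports numFieldNormedType.Exports.
Local Notation normc := (@Normc.normc R).
Implicit Types (z w : R[i]) (a b : R).

Lemma normc_ge0 z : 0 <= normc z.
Proof. exact: (@normr_ge0 _ (Rcomplex R)). Qed.

Lemma normcD_le z w : normc (z + w) <= normc z + normc w.
Proof. exact: le_normcD. Qed.

Lemma normcB_le z w : normc (z - w) <= normc z + normc w.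
Proof. exact: (@ler_normB _ (Rcomplex R)). Qed.

Lemma normc_sum_le (I : finType) (P : pred I) (F : I -> R[i]) :
  normc (\sum_(i | P i) F i) <= \sum_(i | P i) normc (F i).
Proof. exact: (@ler_norm_sum _ (Rcomplex R)). Qed.

Lemma normc_Re z : `|complex.Re z| <= normc z.
Proof.
case: z => a b; rewrite /= -sqrtr_sqr; apply: ler_wsqrtr.
by rewrite lerDl sqr_ge0.
Qed.

Lemma normc_Im z : `|complex.Im z| <= normc z.
Proof.
case: z => a b; rewrite /= -sqrtr_sqr; apply: ler_wsqrtr.
by rewrite lerDr sqr_ge0.
Qed.

Lemma normc_le_ReIm z : normc z <= `|complex.Re z| + `|complex.Im z|.
Proof.
case: z => a b /=; rewrite -[X in _ <= X]ger0_norm ?addr_ge0 //.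
rewrite -sqrtr_sqr; apply: ler_wsqrtr.
rewrite sqrrD !real_normK ?num_real // addrAC.
by rewrite lerDl mulrn_wge0 // mulr_ge0.
Qed.

Lemma cexpD z w : cexp (z + w) = cexp z * cexp w.
Proof.
case: z => a b; case: w => c d; rewrite /cexp /= expRD cosD sinD.
by apply/eqP; rewrite eq_complex /=; apply/andP; split; apply/eqP; ring.
Qed.

Lemma normc_cexp z : normc (cexp z) = expR (complex.Re z).
Proof.
case: z => a b; rewrite /cexp /= !exprMn -mulrDr cos2Dsin2 mulr1.
by rewrite sqrtr_sqr ger0_norm // expR_ge0.
Qed.

Lemma dist_le_of_derive_le1 (f f' : R -> R) a b : continuous f ->
  (forall x : R, is_derive x (1 : R) f (f' x)) -> (forall x, `|f' x| <= 1) ->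
  `|f b - f a| <= `|b - a|.
Proof.
move=> cf df f'1; wlog ab : a b / a <= b.
  by move=> H; have [/H//|/ltW/H] := leP a b; rewrite distrC (distrC b).
have [|c _ ->] := @MVT_segment R f f' a b ab (fun x _ => df x).
  exact/continuous_subspaceT.
by rewrite normrM ler_piMl.
Qed.

Lemma normr_sin_le b : `|sin b| <= `|b|.
Proof.
have := @dist_le_of_derive_le1 sin cos 0 b (@continuous_sin R) (@is_derive_sin R) (@cos_max R).
by rewrite sin0 !subr0.
Qed.

Lemma dist_cos1_le b : `|cos b - 1| <= `|b|.
Proof.
have := @dist_le_of_derive_le1 cos (- sin) 0 b (@continuous_cos R) (@is_derive_cos R).
by rewrite cos0 subr0; apply => x; rewrite /= normrN sin_max.
Qed.

Lemma dist_expR1_le {a} : `|a| <= 1 -> `|expR a - 1| <= expR 1 * `|a|.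
Proof.
move=> a1; have a_le1 : a <= 1 by move: a1; rewrite ler_norml => /andP[].
have ea0 := expR_gt0 a; have ea_le : expR a <= expR 1 by rewrite ler_expR.
have e1 : 1 <= expR (1 : R) by rewrite ltW // expR_gt1.
have lo := expR_ge1Dx a; have hi := expR_ge1Dx (- a).
rewrite expRN -(ler_pM2r ea0) mulVf ?gt_eqF // in hi.
by have [a0|a0] := leP 0 a;
  [rewrite (ger0_norm a0)|rewrite (ltr0_norm a0)]; rewrite ler_norml; apply/andP; split; nra.
Qed.

Lemma normc_cexp_sub1 {w} :
  normc w <= 1 -> normc (cexp w - 1) <= (1 + expR 1 *+ 2) * normc w.
Proof.
case: w => a b; have ha := normc_Re (a +i* b)%C; have hb := normc_Im (a +i* b)%C.
set N := normc _ in ha hb * => w1.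
have a1 : `|a| <= 1 := le_trans ha w1.
have e1 : 1 <= expR (1 : R) by rewrite ltW // expR_gt1.
have ea_le : expR a <= expR 1.
  by rewrite ler_expR; move: a1; rewrite ler_norml => /andP[].
have -> : cexp (a +i* b)%C - 1 = ((expR a * cos b - 1) +i* (expR a * sin b))%C.
  by apply/eqP; rewrite eq_complex /= subr0 !eqxx.
apply: le_trans (normc_le_ReIm _) _ => /=.
have re : `|expR a * cos b - 1| <= expR 1 * `|a| + `|b|.
  have -> : expR a * cos b - 1 = (expR a - 1) * cos b + (cos b - 1) by ring.
  apply: le_trans (ler_normD _ _) _; apply: lerD; last exact: dist_cos1_le.
  rewrite normrM; apply: le_trans _ (dist_expR1_le a1).
  by rewrite ler_piMr ?cos_max.
have im : `|expR a * sin b| <= expR 1 * `|b|.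
  by rewrite normrM ger0_norm ?expR_ge0 // ler_pM ?expR_ge0 ?normr_sin_le.
have : expR 1 * `|a| <= expR 1 * N by rewrite ler_pM2l ?(lt_le_trans ltr01 e1).
have : expR 1 * `|b| <= expR 1 * N by rewrite ler_pM2l ?(lt_le_trans ltr01 e1).
rewrite mulr2n !mulrDl mul1r; lra.
Qed.

(* Split according to whether [u - v] is small (expand at [v]) or large (triangle inequality). *)
Lemma normc_cexpB {u v b1} : expR (complex.Re u) <= b1 -> expR (complex.Re v) <= b1 ->
  normc (cexp u - cexp v) <= b1 * (2 + expR 1 *+ 2) * normc (u - v).
Proof.
move=> hu hv; have b10 : 0 <= b1 := le_trans (expR_ge0 _) hv.
have e1 : 1 <= expR (1 : R) by rewrite ltW // expR_gt1.
have d0 := normc_ge0 (u - v).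
have [small|large] := leP (normc (u - v)) 1.
  have -> : cexp u - cexp v = cexp v * (cexp (u - v) - 1).
    by rewrite mulrBr mulr1 -cexpD addrCA subrr addr0.
  rewrite Normc.normcM normc_cexp; have := normc_cexp_sub1 small.
  have := expR_ge0 (complex.Re v); have := normc_ge0 (cexp (u - v) - 1).
  by nra.
apply: le_trans (normcB_le _ _) _.
rewrite !normc_cexp; have : 0 <= b1 * (normc (u - v) - 1) by rewrite mulr_ge0 // subr_ge0 ltW.
have : 0 <= b1 * expR 1 * normc (u - v) by rewrite !mulr_ge0 // expR_ge0.
rewrite mulr2n; nra.
Qed.

End ComplexExp.

Definition agree n k (x y : Shift n) := forall j, (j < k)%N -> x j = y j.
Arguments agree {n}.

Section Cylinders.
Context {n : nat}.
Implicit Types (x y w : Shift n) (P : set (Shift n)).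

Lemma agree_sym {k x y} : agree k x y -> agree k y x.
Proof. by move=> xy j jk; rewrite xy. Qed.

Lemma agree_le {k l x y} : (k <= l)%N -> agree l x y -> agree k x y.
Proof. by move=> kl xy j jk; apply: xy (leq_trans jk kl). Qed.

Lemma cyl_agree {m x y} : agree m x y -> cyl x m = cyl y m.
Proof.
by move=> xy; apply/seteqP; split=> z hz j jm; rewrite hz // xy.
Qed.

Lemma measurable_cyl w m : measurable (cyl w m : set (SigmaMT n)).
Proof. by apply: sub_sigma_algebra; exists w, m. Qed.

Let pad {k} (f : {ffun 'I_k -> 'I_n.+1}) : Shift n :=
  fun j => if insub j is Some i then f i else ord0.

Let agree_pad k x : agree k (pad [ffun i : 'I_k => x i]) x.
Proof. by move=> j jk; rewrite /pad insubT /= ffunE. Qed.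

(* A set that depends only on the first [k] coordinates is a finite union of cylinders. *)
Lemma measurable_agree_closed k P :
  (forall x y, agree k x y -> P x -> P y) -> measurable (P : set (SigmaMT n)).
Proof.
move=> HP.
have -> : P = \bigcup_(f in [set f : {ffun 'I_k -> 'I_n.+1} | P (pad f)]) cyl (pad f) k.
  apply/seteqP; split=> [x Px|x [f Pf /agree_sym xf]]; last exact: HP xf Pf.
  have xpad := agree_sym (agree_pad k x).
  by exists [ffun i : 'I_k => x i]; first exact: HP xpad Px.
apply: fin_bigcup_measurable; first exact: finite_finset.
by move=> f _; apply: measurable_cyl.
Qed.

Lemma measurable_SigmaA (A : 'M[int]_n.+1) : measurable (SigmaA A : set (SigmaMT n)).
Proof.
have -> : SigmaA A = \bigcap_j [set x : Shift n | A (x j) (x j.+1) = 1].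
  by apply/seteqP; split=> x H j => [_|]; apply: H.
apply: bigcapT_measurable => j; apply: (@measurable_agree_closed j.+2) => x y xy /=.
by rewrite !xy.
Qed.

End Cylinders.

(* No measurability of the integrand is assumed: the bounds are obtained directly from
   the supremum over simple functions that defines the nonnegative integral. *)
Section IntegralBounds.
Context {R : realType} d (T : measurableType d) (mu : {measure set T -> \bar R}).

Lemma ge0_integral_bounded (D : set T) (G : T -> \bar R) (lo hi : R) : measurable D ->
  0 <= lo -> 0 <= hi -> (forall x, D x -> (lo%:E <= G x <= hi%:E)%E) ->
  (lo%:E * mu D <= \int[mu]_(x in D) G x <= hi%:E * mu D)%E.
Proof.
move=> mD lo0 hi0 H.
have G0 x : D x -> (0 <= G x)%E.
  by move=> Dx; have /andP[+ _] := H x Dx; apply: le_trans; rewrite lee_fin.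
rewrite -!(integral_cst mu mD) !ge0_integralE //.
apply/andP; split; apply: ereal_sup_le; apply: image_subset => h /= hle x;
  have := hle x; rewrite /patch; case: ifP => // /set_mem Dx;
  have /andP[h1 h2] := H x Dx; move/le_trans; apply => //.
Qed.

Lemma EFin_fine_between {e : \bar R} {x y : R} : (x%:E <= e <= y%:E)%E -> (fine e)%:E = e.
Proof. by case: e => [r||] //=; rewrite ?leye_eq ?leeNy_eq ?andbF. Qed.

Lemma max0_subN (x : R) : Num.max x 0 - Num.max (- x) 0 = x.
Proof.
have [x0|x0] := boolP (0 <= x); last rewrite -ltNge in x0.
  by rewrite (max_l x0) (max_r _) ?subr0 // oppr_le0.
by rewrite (max_r (ltW x0)) (max_l _) ?sub0r ?opprK // oppr_ge0 ltW.
Qed.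

Lemma Rintegral_bounded (D : set T) (f : T -> R) (lo hi M : R) : measurable D ->
  mu D = M%:E -> 0 <= M ->
  (forall x, D x -> lo <= f x <= hi) -> lo * M <= Rintegral mu D f <= hi * M.
Proof.
move=> mD muD M0 H; rewrite /Rintegral integralE.
have max0 (a : R) : 0 <= Num.max a 0 by rewrite le_max lexx orbT.
have hP : ((Num.max lo 0 * M)%:E <= \int[mu]_(x in D) ((fun x => (f x)%:E)^\+)%E x
           <= (Num.max hi 0 * M)%:E)%E.
  rewrite !EFinM -muD; apply: ge0_integral_bounded => // x Dx.
  by have /andP[? ?] := H x Dx; rewrite funeposE -EFin_max !lee_fin !le_max2.
have hN : ((Num.max (- hi) 0 * M)%:E <= \int[mu]_(x in D) ((fun x => (f x)%:E)^\-)%E x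
           <= (Num.max (- lo) 0 * M)%:E)%E.
  rewrite !EFinM -muD; apply: ge0_integral_bounded => // x Dx.
  by have /andP[? ?] := H x Dx; rewrite funenegE -EFinN -EFin_max !lee_fin !le_max2 // lerN2.
have eP := EFin_fine_between hP; have eN := EFin_fine_between hN.
move: hP hN; rewrite -eP -eN -EFinB /= !lee_fin => /andP[? ?] /andP[? ?].
have : lo * M = Num.max lo 0 * M - Num.max (- lo) 0 * M by rewrite -mulrBl max0_subN.
have : hi * M = Num.max hi 0 * M - Num.max (- hi) 0 * M by rewrite -mulrBl max0_subN.
by move=> ? ?; apply/andP; split; lra.
Qed.

Lemma dist_average_le (Z : set T) (f : T -> R) (M c W : R) : measurable Z ->
  mu Z = M%:E -> 0 < M -> (forall y, Z y -> `|f y - c| <= W) ->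
  `|c - M^-1 * Rintegral mu Z f| <= W.
Proof.
move=> mZ muZ M0 H.
have /andP[lo hi] : (c - W) * M <= Rintegral mu Z f <= (c + W) * M.
  by apply: Rintegral_bounded (ltW M0) _ => // y /H; rewrite ler_distl.
have -> : c - M^-1 * Rintegral mu Z f = (c * M - Rintegral mu Z f) / M.
  by field; rewrite gt_eqF.
rewrite normrM [`|M^-1|]gtr0_norm ?invr_gt0 // ler_pdivrMr // ler_distl.
by rewrite mulrBl mulrDl in lo hi; apply/andP; split; lra.
Qed.
End IntegralBounds.

Section Variation.
Context {R : realType} {n : nat} {A : 'M[int]_n.+1}.
Local Notation normc := (@Normc.normc R).
Local Notation S := (SigmaA A).
Implicit Types (phi : Shift n -> R[i]) (x y : Shift n).

Lemma var_le k phi e :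
  (forall x y, S x -> S y -> agree k x y -> normc (phi x - phi y) <= e) ->
  (var A k phi <= e%:E)%E.
Proof.
move=> H; apply: ge_ereal_sup => _ [x [y [Sx [Sy [xy ->]]]]].
by rewrite lee_fin; apply: H.
Qed.

Lemma var_ubound {k phi e x y} : (var A k phi <= e%:E)%E -> S x -> S y ->
  agree k x y -> normc (phi x - phi y) <= e.
Proof.
move=> H Sx Sy xy; rewrite -lee_fin; apply: le_trans H.
by apply: ereal_sup_ubound; exists x, y.
Qed.

Lemma supnorm_le phi e : (forall x, S x -> normc (phi x) <= e) ->
  (supnorm A phi <= e%:E)%E.
Proof.
move=> H; apply: ge_ereal_sup => _ [x [Sx ->]].
by rewrite lee_fin; apply: H.
Qed.

Lemma fine_le_EFin {e : \bar R} {M : R} : 0 <= M -> (e <= M%:E)%E -> fine e <= M.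
Proof. by case: e => [r||] //=; rewrite lee_fin. Qed.

(* [fine] sends [+oo] to [0], so a supremum of nonnegative values has nonnegative [fine]. *)
Lemma fine_ereal_sup_ge0 (X : set (\bar R)) : (forall e, X e -> (0 <= e)%E) ->
  0 <= fine (ereal_sup X).
Proof.
move=> H; have [[e Xe]|nX] := pselect (X !=set0).
  have := ereal_sup_ubound Xe; have := H e Xe.
  by case: (ereal_sup X) => [r||] //= e0 er; rewrite -lee_fin (le_trans e0 er).
rewrite (_ : X = set0) ?ereal_sup0 //.
by apply/seteqP; split=> // e Xe; apply: nX; exists e.
Qed.

Lemma fine_supnorm_ge0 phi : 0 <= fine (supnorm A phi).
Proof. by apply: fine_ereal_sup_ge0 => _ [x [_ ->]]; rewrite lee_fin normc_ge0. Qed.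

Lemma fine_var_ge0 k phi : 0 <= fine (var A k phi).
Proof.
by apply: fine_ereal_sup_ge0 => _ [x [y [_ [_ [_ ->]]]]]; rewrite lee_fin normc_ge0.
Qed.

Lemma normc_sub_Eop (mu : probability (SigmaMT n) R) m phi x W :
  (forall U, openA A U -> U !=set0 -> (0 < mu U)%E) -> S x ->
  (forall y, S y -> agree m x y -> normc (phi y - phi x) <= W) ->
  normc (phi x - Eop A mu m phi x) <= W *+ 2.
Proof.
move=> mu_open Sx H; rewrite /Eop /cint.
set Z := cyl x m `&` S.
have mZ : measurable (Z : set (SigmaMT n)).
  exact: measurableI (measurable_cyl x m) (measurable_SigmaA A).
have muZ_gt0 : (0 < mu Z)%E.
  apply: mu_open; last by exists x.
  split=> [y []//|y [xy Sy]]; exists m => z [yz Sz]; split=> // j jm.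
  by rewrite yz // xy.
have muZE : mu Z = (fine (mu Z))%:E.
  by rewrite (EFin_fine_between (x := 0) (y := 1)) // ltW //= probability_le1.
set M := fine (mu Z) in muZE *; have M0 : 0 < M by rewrite -lte_fin -muZE.
have avg (F : R[i] -> R) : (forall u v, F (u - v) = F u - F v) ->
    (forall u, `|F u| <= normc u) ->
    `|F (phi x) - M^-1 * Rintegral mu Z (F \o phi)| <= W.
  move=> FB Fnorm; apply: dist_average_le mZ muZE M0 _ => y [xy Sy] /=.
  by rewrite -FB; apply: le_trans (Fnorm _) (H y Sy (agree_sym xy)).
have := avg _ (fun u v => raddfB (@complex.Re R : Rcomplex R -> R) u v) normc_Re.
have := avg _ (fun u v => raddfB (@complex.Im R : Rcomplex R -> R) u v) normc_Im.
case: (phi x) => a b hb ha; apply: le_trans (normc_le_ReIm _) _.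
by rewrite /= mulr2n !mul0r subr0 addr0; apply: lerD.
Qed.

(* [sup] of a set that is not bounded above is [0] in MathComp; the bound comes from
   [var_1 g] being finite and the alphabet being finite. *)
Lemma expR_Re_le_of_sup {g} {b1 V : R} : (var A 1 g <= V%:E)%E ->
  expR (sup [set complex.Re (g x) | x in S]) <= b1 ->
  forall x, S x -> expR (complex.Re (g x)) <= b1.
Proof.
move=> hV hsup x Sx; apply: le_trans hsup; rewrite ler_expR.
apply: ub_le_sup; last by exists x.
have rep_ex (a : 'I_n.+1) : exists z, (exists y, S y /\ y 0%N = a) -> S z /\ z 0%N = a.
  by have [[y hy]|h] := pselect (exists y, S y /\ y 0%N = a); [exists y|exists x].
have [rep hrep] := choice rep_ex.
exists (\sum_(a < n.+1) `|complex.Re (g (rep a))| + V) => _ [y Sy <-].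
have [Sz z0] := hrep (y 0%N) (ex_intro _ y (conj Sy erefl)).
have yz : agree 1 y (rep (y 0%N)) by case.
have hd : complex.Re (g y) - complex.Re (g (rep (y 0%N))) <= V.
  rewrite -raddfB; apply: le_trans (ler_norm _) (le_trans (normc_Re _) _).
  exact: var_ubound hV Sy Sz yz.
have hz : complex.Re (g (rep (y 0%N))) <= \sum_(a < n.+1) `|complex.Re (g (rep a))|.
  rewrite (bigD1 (y 0%N)) //=; apply: le_trans (ler_norm _) _.
  by rewrite lerDl sumr_ge0.
by rewrite addrC; lra.
Qed.

End Variation.

Section Transfer.
Context {R : realType} {n : nat} {A : 'M[int]_n.+1}.
Local Notation normc := (@Normc.normc R).
Local Notation S := (SigmaA A).
Implicit Types (phi psi g : Shift n -> R[i]) (x y : Shift n).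

Lemma admissible_scons a x :
  admissible A (scons a x) <-> A a (x 0%N) = 1 /\ admissible A x.
Proof.
split=> [H|[h0 hx] [|j]//]; last exact: hx.
by split=> [|j]; [apply: (H 0%N)|apply: (H j.+1)].
Qed.

Lemma LopB g phi psi x :
  Lop A g phi x - Lop A g psi x = Lop A g (fun y => phi y - psi y) x.
Proof.
rewrite /Lop -sumrB; apply: eq_bigr => a _.
by case: ifP => _; rewrite ?mulrBr ?subr0.
Qed.

Lemma normc_Lop_le {g psi b1 W} : 0 <= b1 -> 0 <= W ->
  (forall x, S x -> expR (complex.Re (g x)) <= b1) ->
  (forall x, S x -> normc (psi x) <= W) ->
  forall x, normc (Lop A g psi x) <= n.+1%:R * (b1 * W).
Proof.
move=> b10 W0 hb hW x; apply: le_trans (normc_sum_le _ _ _) _.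
apply: (@le_trans _ _ (\sum_(a < n.+1) (b1 * W))); last by rewrite sumr_const card_ord mulr_natl.
apply: ler_sum => a _.
case: ifP => [/asboolP adm|_]; last by rewrite Normc.normc0 mulr_ge0.
by rewrite Normc.normcM normc_cexp ler_pM ?expR_ge0 ?normc_ge0 ?hb ?hW.
Qed.

(* Preimages [a.x], [a.y] of [k]-agreeing points agree to order [k + 1], and [k > 0]
   makes them admissible simultaneously. *)
Lemma var_Lop_le {g psi b1 W G X k} : 0 <= b1 -> 0 <= W -> 0 <= G -> 0 <= X -> (0 < k)%N ->
  (forall x, S x -> expR (complex.Re (g x)) <= b1) ->
  (forall x, S x -> normc (psi x) <= W) ->
  (var A k.+1 g <= G%:E)%E -> (var A k.+1 psi <= X%:E)%E ->
  (var A k (Lop A g psi) <= (n.+1%:R * (b1 * X + b1 * (2 + expR 1 *+ 2) * G * W))%:E)%E.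
Proof.
move=> b10 W0 G0 X0 k0 hb hW hg hpsi; apply: var_le => x y Sx Sy xy.
rewrite /Lop -sumrB; apply: le_trans (normc_sum_le _ _ _) _.
apply: (@le_trans _ _ (\sum_(a < n.+1) (b1 * X + b1 * (2 + expR 1 *+ 2) * G * W))).
  2: by rewrite sumr_const card_ord mulr_natl.
apply: ler_sum => a _.
have xy0 : x 0%N = y 0%N := xy 0%N k0.
have axy : agree k.+1 (scons a x) (scons a y) by case=> //= j; apply: xy.
have adm_xy : admissible A (scons a x) <-> admissible A (scons a y).
  by rewrite !admissible_scons xy0; split=> -[h _]; [split=> //|split].
case: (pselect (admissible A (scons a x))) => hx; last first.
  have hy : ~ admissible A (scons a y) by rewrite -adm_xy.
  rewrite (asboolF hx) (asboolF hy) subr0 Normc.normc0.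
  by rewrite addr_ge0 // !mulr_ge0 // addr_ge0 // mulrn_wge0 // expR_ge0.
have hy : admissible A (scons a y) by rewrite -adm_xy.
rewrite (asboolT hx) (asboolT hy).
set u := g (scons a x); set v := g (scons a y).
set p := psi (scons a x); set q := psi (scons a y).
have -> : cexp u * p - cexp v * q = cexp u * (p - q) + (cexp u - cexp v) * q.
  by rewrite mulrBr mulrBl addrA subrK.
apply: le_trans (normcD_le _ _) _; rewrite !Normc.normcM normc_cexp; apply: lerD.
  by apply: ler_pM; rewrite ?expR_ge0 ?normc_ge0 ?hb //; apply: var_ubound hpsi hx hy axy.
apply: ler_pM; rewrite ?normc_ge0 ?hW //.
apply: le_trans (normc_cexpB (hb _ hx) (hb _ hy)) _.
by rewrite ler_wpM2l ?mulr_ge0 ?addr_ge0 ?mulrn_wge0 ?expR_ge0 //; apply: var_ubound hg hx hy axy.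
Qed.

End Transfer.

Section ThetaBounds.
Context {R : realType} {D r : R}.
Hypotheses (D0 : 0 <= D) (r0 : 0 <= r) (r1 : r <= 1).
Local Notation th := (theta D r).

Lemma theta_ge0 k : 0 <= th k.
Proof. by rewrite mulr_ge0 // exprn_ge0. Qed.

Lemma theta_expS_le k : th k.+1 ^+ k.+1 <= D * th k.+1 ^+ k.
Proof.
rewrite exprSr mulrC ler_wpM2r ?exprn_ge0 ?theta_ge0 //.
by rewrite -[X in _ <= X]mulr1 ler_wpM2l // exprn_ile1.
Qed.

Lemma theta_exp_le_tail {m k} : (m <= k.+1)%N ->
  th k.+2 ^+ k.+1 <= D * r ^+ (2 * m) * th k.+1 ^+ k.
Proof.
move=> mk; rewrite /theta (exprMn _ D (r ^+ k.+2)) (exprMn _ D (r ^+ k.+1)) -!exprM.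
have e : r ^+ (k.+2 * k.+1) <= r ^+ (2 * m) * r ^+ (k.+1 * k).
  by rewrite -exprD; apply: ler_wiXn2l => //; nia.
apply: le_trans (ler_wpM2l _ e) _; first by rewrite exprn_ge0.
by rewrite [D ^+ k.+1]exprS mulrACA.
Qed.

Lemma theta_exp_le_head {m k} : th m.+1 <= 1 -> (0 < k)%N -> (k < m)%N ->
  th m.+1 ^+ m <= D * r ^+ (2 * m) * th k.+1 ^+ k.
Proof.
move=> t1 k0 km; have t0 := theta_ge0 m.+1.
have tj : th m.+1 ^+ (m - k) <= th m.+1.
  by rewrite -[X in _ <= X]expr1; apply: ler_wiXn2l => //; rewrite subn_gt0.
have -> : th m.+1 ^+ m = th m.+1 ^+ k * th m.+1 ^+ (m - k) by rewrite -exprD subnKC // ltnW.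
apply: le_trans (ler_wpM2l (exprn_ge0 k t0) tj) _.
rewrite /theta (exprMn _ D (r ^+ k.+1)) (exprMn _ D (r ^+ m.+1)) -!exprM mulrACA.
have e : r ^+ (m.+1 * k) * r ^+ m.+1 <= r ^+ (2 * m) * r ^+ (k.+1 * k).
  by rewrite -!exprD; apply: ler_wiXn2l => //; nia.
apply: le_trans (ler_wpM2l _ e) _; first by rewrite mulr_ge0 // exprn_ge0.
by rewrite [D ^+ k * D]mulrC mulrACA.
Qed.

Lemma theta_exp_le_sqr {m} : th m.+1 <= 1 -> (2 <= m)%N ->
  th m.+1 ^+ m <= D ^+ 2 * r ^+ (2 * m).
Proof.
move=> t1 m2; apply: le_trans (ler_wiXn2l (theta_ge0 _) t1 m2) _.
rewrite /theta exprMn -exprM ler_wpM2l ?exprn_ge0 //.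
by apply: ler_wiXn2l => //; nia.
Qed.

End ThetaBounds.

Section BSpace.
Context {R : realType} {n : nat} {A : 'M[int]_n.+1} {D r : R}.
Hypotheses (D0 : 0 < D) (r0 : 0 < r) (r1 : r < 1).
Import numFieldTopology.Exports numFieldNormedType.Exports.
Local Notation th := (theta D r).

Lemma powR_le_1D (C p : R) : 0 <= C -> 0 <= p -> p <= 1 -> C `^ p <= 1 + C.
Proof.
move=> C0 p0 p1; have [C1|C1] := leP C 1.
  apply: le_trans (_ : 1 `^ p <= _); first by rewrite ge0_ler_powR ?nnegrE.
  by rewrite powR1 lerDl.
by apply: le_trans (ler1_powR _ _) _; rewrite ?lerDr // ltW.
Qed.

(* [var_k psi <= C th_(k+1)^k] gives [var_k psi ^ (1/k) <= (1 + C) th_(k+1)], which tends to 0. *)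
Lemma Bconsts_inV psi C : Bconsts A th psi C -> inV A psi.
Proof.
move=> [C0 hC]; split.
  by apply: nearW => k; apply: le_lt_trans (hC k) _; apply: ltey.
have : (fun k => ((1 + C) * D * r) * r ^+ k) @ \oo --> (0 : R).
  rewrite -(mulr0 ((1 + C) * D * r)); apply: cvgM; first exact: cvg_cst.
  by apply: cvg_expr; rewrite ger0_norm ?ltW.
apply: (squeeze_cvgr _ (cvg_cst 0)); near=> k.
have k0 : (0 < k)%N by near: k; exists 1%N.
rewrite /varroot powR_ge0 /=.
have D_ge0 := ltW D0; have r_ge0 := ltW r0.
have bnd0 : 0 <= C * th k.+1 ^+ k by rewrite mulr_ge0 ?exprn_ge0 ?theta_ge0.
have p0 : 0 <= k%:R^-1 :> R by rewrite invr_ge0.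
apply: le_trans (ge0_ler_powR p0 _ _ (fine_le_EFin bnd0 (hC k))) _;
  rewrite ?nnegrE ?fine_var_ge0 //.
rewrite powRM ?exprn_ge0 ?theta_ge0 // -powR_mulrn ?theta_ge0 // -powRrM mulfV; last first.
  by rewrite pnatr_eq0 -lt0n.
rewrite powRr1 ?theta_ge0 //.
rewrite (_ : _ * r ^+ k = (1 + C) * th k.+1); last by rewrite /theta exprS !mulrA.
by rewrite ler_wpM2r ?theta_ge0 // powR_le_1D // invf_le1 ?ler1n ?ltr0n.
Unshelve. all: by end_near.
Qed.

Lemma inB_Bnorm_le {phi psi c} : 0 < c -> inB A th phi ->
  (forall C, Bconsts A th phi C ->
     Bconsts A th psi (c * C) /\ (supnorm A psi <= (c * C)%:E)%E) ->
  inB A th psi /\ Bnorm A th psi <= c *+ 2 * Bnorm A th phi.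
Proof.
move=> c0 [_ [C0 hC0]] hpsi.
have inBpsi : inB A th psi.
  by have [h _] := hpsi C0 hC0; split; [apply: Bconsts_inV h|exists (c * C0)].
split=> //.
have Bnorm_le C : Bconsts A th phi C -> Bnorm A th psi <= c *+ 2 * C.
  move=> hC; have [hB hsup] := hpsi C hC; have [C_ge0 _] := hC.
  have cC0 : 0 <= c * C by rewrite mulr_ge0 // ltW.
  have hinf : inf (Bconsts A th psi) <= c * C by apply: ge_inf hB; exists 0 => y [].
  by rewrite /Bnorm mulrnAl mulr2n lerD // fine_le_EFin.
have c20 : 0 < c *+ 2 by rewrite pmulrn_rgt0.
have : Bnorm A th psi / (c *+ 2) <= inf (Bconsts A th phi).
  apply: lb_le_inf; first by exists C0.
  by move=> C hC; rewrite ler_pdivrMr // mulrC Bnorm_le.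
rewrite ler_pdivrMr // mulrC => /le_trans; apply.
apply: ler_wpM2l; first exact: ltW.
by rewrite /Bnorm; apply: ler_wpDl (fine_supnorm_ge0 _) (lexx _).
Qed.

End BSpace.

Section OneStep.
Context {R : realType} {n : nat} {A : 'M[int]_n.+1} {mu : probability (SigmaMT n) R}.
Hypothesis mu_open : forall U, openA A U -> U !=set0 -> (0 < mu U)%E.
Context {D r b1 b2 : R} {m : nat} {g : Shift n -> R[i]}.
Hypotheses (D0 : 0 < D) (r0 : 0 < r) (r1 : r < 1) (b10 : 0 < b1) (b20 : 0 < b2).
Hypotheses (m2 : (2 <= m)%N) (theta_m1 : theta D r m.+1 <= 1).
Hypothesis g_Re : forall x, SigmaA A x -> expR (complex.Re (g x)) <= b1.
Hypothesis g_var : forall k, (0 < k)%N -> (var A k g <= (b2 * theta D r k ^+ k)%:E)%E.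
Local Notation normc := (@Normc.normc R).
Local Notation S := (SigmaA A).
Local Notation th := (theta D r).
Local Notation P := (r ^+ (2 * m)).
Local Notation LK := (opsub (Lop A g) (Kop A g mu m)).
Implicit Types (phi : Shift n -> R[i]) (C : R).

Let D_ge0 := ltW D0.
Let r_ge0 := ltW r0.
Let r_le1 := ltW r1.

Let dev phi x := phi x - Eop A mu m phi x.

Lemma LK_dev phi : LK phi = Lop A g (dev phi).
Proof. by apply/funext => x; apply: LopB. Qed.

Lemma normc_dev_le {phi C} : Bconsts A th phi C ->
  forall {x}, S x -> normc (dev phi x) <= (C * th m.+1 ^+ m) *+ 2.
Proof.
move=> [_ hC] x Sx; apply: normc_sub_Eop => // y Sy xy.
exact: var_ubound (hC m) Sy Sx (agree_sym xy).
Qed.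

(* Past order [m] the averaging [E_m] is invisible; before it, [dev phi] is uniformly small. *)
Lemma var_dev_le {phi C k} : Bconsts A th phi C -> (0 < k)%N ->
  (var A k.+1 (dev phi) <= (C * D * P * th k.+1 ^+ k *+ 4)%:E)%E.
Proof.
move=> hphi k0; have [C0 hC] := hphi.
have th_k : 0 <= C * D * P * th k.+1 ^+ k.
  by rewrite !mulr_ge0 ?exprn_ge0 ?(theta_ge0 D_ge0 r_ge0).
apply: var_le => u v Su Sv uv.
have [mk|km] := leqP m k.+1.
  have -> : dev phi u - dev phi v = phi u - phi v.
    rewrite /dev /Eop (cyl_agree (agree_le mk uv)).
    by rewrite opprB addrA subrK.
  apply: le_trans (var_ubound (hC k.+1) Su Sv uv) _.
  apply: le_trans (_ : C * D * P * th k.+1 ^+ k <= _); last first.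
    by rewrite !mulrS mulr0n; lra.
  by rewrite -!mulrA ler_wpM2l // mulrA theta_exp_le_tail.
apply: le_trans (normcB_le _ _) _.
apply: le_trans (lerD (normc_dev_le hphi Su) (normc_dev_le hphi Sv)) _.
have := theta_exp_le_head D_ge0 r_ge0 r_le1 theta_m1 k0 (ltnW km).
move/(ler_wpM2l C0); rewrite !mulrA => h.
by rewrite !mulrS !mulr0n; lra.
Qed.

Definition LK_const : R :=
  n.+1%:R * b1 * (D *+ 4 + D ^+ 2 *+ 4 + (2 + expR 1 *+ 2) * b2 * D ^+ 3 *+ 2).

Lemma LK_const_gt0 : 0 < LK_const.
Proof.
rewrite /LK_const !mulr_gt0 // -addrA ltr_pwDl ?pmulrn_rgt0 //.
by rewrite addr_ge0 ?mulrn_wge0 ?mulr_ge0 ?exprn_ge0 // ltW.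
Qed.

Lemma dev_sup_le {phi C} : Bconsts A th phi C ->
  forall x, S x -> normc (dev phi x) <= (C * D ^+ 2 * P) *+ 2.
Proof.
move=> hphi x Sx; apply: le_trans (normc_dev_le hphi Sx) _.
by rewrite lerMn2r /= -mulrA ler_wpM2l ?theta_exp_le_sqr //; case: hphi.
Qed.

Lemma normc_LK_le {phi C} : Bconsts A th phi C -> forall {x}, S x ->
  normc (LK phi x) <= (n.+1%:R * b1 * (C * D ^+ 2 * P)) *+ 2.
Proof.
move=> hphi x Sx; have [C0 _] := hphi.
rewrite LK_dev; apply: le_trans (normc_Lop_le (ltW b10) _ g_Re (dev_sup_le hphi) x) _.
  by rewrite mulrn_wge0 // !mulr_ge0 ?exprn_ge0.
by rewrite !mulrnAr mulrA.
Qed.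

Let LK_constE C : LK_const * P * C = n.+1%:R * b1 * (C * D ^+ 2 * P) *+ 4 +
  n.+1%:R * b1 * (D *+ 4 + (2 + expR 1 *+ 2) * b2 * D ^+ 3 *+ 2) * P * C.
Proof. by rewrite /LK_const; ring. Qed.

Lemma supnorm_LK_le phi C : Bconsts A th phi C ->
  (supnorm A (LK phi) <= (LK_const * P * C)%:E)%E.
Proof.
move=> hphi; have [C0 _] := hphi; apply: supnorm_le => x Sx.
apply: le_trans (normc_LK_le hphi Sx) _; rewrite LK_constE.
have : 0 <= n.+1%:R * b1 * (C * D ^+ 2 * P) by rewrite !mulr_ge0 ?exprn_ge0 // ltW.
have : 0 <= n.+1%:R * b1 * (D *+ 4 + (2 + expR 1 *+ 2) * b2 * D ^+ 3 *+ 2) * P * C.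
  by rewrite !mulr_ge0 ?addr_ge0 ?mulrn_wge0 ?mulr_ge0 ?exprn_ge0 // ltW.
by rewrite !mulrS !mulr0n; lra.
Qed.

Lemma var_LK_le phi C k : Bconsts A th phi C ->
  (var A k (LK phi) <= (LK_const * P * C * th k.+1 ^+ k)%:E)%E.
Proof.
move=> hphi; have [C0 _] := hphi.
set Y := n.+1%:R * b1 * (C * D ^+ 2 * P).
set X := n.+1%:R * b1 * (D *+ 4 + (2 + expR 1 *+ 2) * b2 * D ^+ 3 *+ 2) * P * C.
have X0 : 0 <= X by rewrite !mulr_ge0 ?addr_ge0 ?mulrn_wge0 ?mulr_ge0 ?exprn_ge0 // ltW.
have Y0 : 0 <= Y by rewrite !mulr_ge0 ?exprn_ge0 // ltW.
case: k => [|k].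
  apply: var_le => x y Sx Sy _; rewrite expr0 mulr1 LK_constE -/X -/Y.
  apply: le_trans (normcB_le _ _) _.
  apply: le_trans (lerD (normc_LK_le hphi Sx) (normc_LK_le hphi Sy)) _.
  by rewrite -/Y !mulrS !mulr0n; lra.
have thk0 : 0 <= th k.+2 ^+ k.+1 by rewrite exprn_ge0 ?theta_ge0.
have h1 := g_var (k.+2) isT.
have h2 := @var_dev_le _ _ k.+1 hphi isT.
have h3 := dev_sup_le hphi.
have W0 : 0 <= C * D ^+ 2 * P *+ 2 by rewrite mulrn_wge0 // !mulr_ge0 ?exprn_ge0.
have G0 : 0 <= b2 * th k.+2 ^+ k.+2 by rewrite mulr_ge0 ?exprn_ge0 ?theta_ge0 // ltW.
have X'0 : 0 <= C * D * P * th k.+2 ^+ k.+1 *+ 4.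
  by rewrite mulrn_wge0 // !mulr_ge0 // exprn_ge0.
have := var_Lop_le (k := k.+1) (ltW b10) W0 G0 X'0 isT g_Re h3 h1 h2.
rewrite -LK_dev => /le_trans; apply; rewrite lee_fin LK_constE mulrDl -/X -/Y.
set t := th k.+2 ^+ k.+1.
set K := n.+1%:R * b1 * (2 + expR 1 *+ 2) * b2 * (C * D ^+ 2 * P *+ 2).
have K0 : 0 <= K by rewrite !mulr_ge0 // ltW.
have := ler_wpM2l K0 (theta_expS_le D_ge0 r_ge0 r_le1 k.+1); rewrite -/t.
have -> : X * t = n.+1%:R * (b1 * (C * D * P * t *+ 4)) + K * (D * t).
  by rewrite /X /K; ring.
have -> : n.+1%:R * (b1 * (C * D * P * t *+ 4) +
   b1 * (2 + expR 1 *+ 2) * (b2 * th k.+2 ^+ k.+2) * (C * D ^+ 2 * P *+ 2)) =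
   n.+1%:R * (b1 * (C * D * P * t *+ 4)) + K * th k.+2 ^+ k.+2 by rewrite /K; ring.
have : 0 <= Y *+ 4 * t by rewrite mulr_ge0 // mulrn_wge0.
lra.
Qed.

Lemma LK_inB_Bnorm_le {phi} : inB A th phi ->
  inB A th (LK phi) /\
  Bnorm A th (LK phi) <= LK_const * P *+ 2 * Bnorm A th phi.
Proof.
move=> hphi; apply: (inB_Bnorm_le D0 r0 r1 _ hphi) => [|C hC].
  by rewrite mulr_gt0 ?LK_const_gt0 ?exprn_gt0.
split; last exact: supnorm_LK_le.
split=> [|k]; last exact: var_LK_le.
have [C0 _] := hC; have K0 := ltW LK_const_gt0.
by rewrite mulr_ge0 // mulr_ge0 // exprn_ge0.
Qed.

End OneStep.

Theorem lemma5p1 (R : realType) (n : nat) (D r b1 b2 : R) :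
  0 < D -> 0 < r -> r < 1 -> 0 < b1 -> 0 < b2 ->
  exists C4 : R, 0 < C4 /\
  forall A : 'M[int]_n.+1, zero_one A -> aperiodic A ->
  forall mu : probability (SigmaMT n) R,
    mu (SigmaA A) = 1%E ->
    (forall U, openA A U -> U !=set0 -> (0 < mu U)%E) ->
  forall (m q : nat) (g : Shift n -> R[i]),
    (2 <= m)%N -> D * r ^+ m.+1 <= 1 ->
    inV A g ->
    expR (sup [set complex.Re (g x) | x in SigmaA A]) <= b1 ->
    (forall k : nat, (0 < k)%N -> (var A k g <= (b2 * theta D r k ^+ k)%:E)%E) ->
  forall phi : Shift n -> R[i], inB A (theta D r) phi ->
    let T := opsub (iter q (Lop A g)) (Kq A g mu m q) in
    inB A (theta D r) (T phi) /\
    Bnorm A (theta D r) (T phi)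
      <= C4 ^+ q * (r ^+ (2 * m)) ^+ q * Bnorm A (theta D r) phi.
Proof.
move=> D0 r0 r1 b10 b20.
have K0 : 0 < @LK_const R n D b1 b2 *+ 2 by rewrite pmulrn_rgt0 // LK_const_gt0.
exists (@LK_const R n D b1 b2 *+ 2); split=> //.
move=> A _ _ mu _ mu_open m q g m2 theta_m1 _ hsup hg phi hphi T.
have g_Re := expR_Re_le_of_sup (hg 1%N isT) hsup.
set F := opsub (Lop A g) (Kop A g mu m).
have -> : T phi = iter q F phi.
  by apply/funext => x; rewrite /T /Kq /opsub opprB addrC subrK.
elim: q {T} => [|q [inB_q Bnorm_q]] /=; first by rewrite !expr0 !mul1r.
have [inB_Sq Bnorm_Sq] :=
  LK_inB_Bnorm_le mu_open D0 r0 r1 b10 b20 m2 theta_m1 g_Re hg inB_q.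
split=> //; apply: le_trans Bnorm_Sq _.
set c := LK_const *+ 2; set P := r ^+ (2 * m).
have -> : c ^+ q.+1 * P ^+ q.+1 * Bnorm A (theta D r) phi =
  c * P * (c ^+ q * P ^+ q * Bnorm A (theta D r) phi) by rewrite !exprS; ring.
by rewrite -mulrnAl ler_wpM2l // mulr_ge0 ?exprn_ge0 // ltW.
Qed.
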